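(* Let $n\ge 1$, $N=2^n$ and $s=(N-1)/2$. Let $0\le j<N/2$ be an integer and let $z=W^{(N)}_j$ be the $j$-th Hadamard codeword. Then $$\hat H^{\otimes n}\,\hat U_z\,\hat H^{\otimes n}\left(\left|\tfrac12\right\rangle_s+\left|-\tfrac12\right\rangle_s\right)=\left|\tfrac12+j\right\rangle_s+\left|-\tfrac12-j\right\rangle_s .$$
   Context: Work in $\mathbb{C}^N$ with computational basis $\{|y\rangle : y=0,1,\dots,N-1\}$. The spin basis states $|m\rangle_s$, $m\in\{-s,-s+1,\dots,s\}$, are identified with computational basis states via $|m\rangle_s=|m+s\rangle$; for example $|\tfrac12\rangle_s=|N/2\rangle$ and $|-\tfrac12\rangle_s=|N/2-1\rangle$. For $x,y\in\{0,\dots,N-1\}$ let $x\cdot y\in\{0,1\}$ be the inner product modulo 2 of their $n$-bit binary expansions. $\hat H^{\otimes n}$ is the $n$-qubit Hadamard transform, $\hat H^{\otimes n}|y\rangle=N^{-1/2}\sum_{x=0}^{N-1}(-1)^{x\cdot y}|x\rangle$. For $j\in\{0,\dots,N-1\}$ the Hadamard codeword $W^{(N)}_j\in\{0,1\}^N$ is the bit string whose bit at position $x\in\{0,\dots,N-1\}$ is $x\cdot j$. For a string $z=(z_0,\dots,z_{N-1})\in\{0,1\}^N$, the oracle $\hat U_z$ is the diagonal unitary $\hat U_z|x\rangle=(-1)^{z_x}|x\rangle$. *)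

From mathcomp Require Import all_boot all_order all_algebra all_field.
Set Implicit Arguments. Unset Strict Implicit. Unset Printing Implicit Defensive.
Import Order.TTheory GRing.Theory Num.Theory.
Local Open Scope ring_scope.

Definition bit (k x : nat) : bool := odd (x %/ 2 ^ k).

Definition bdot (n x y : nat) : bool :=
  odd (\sum_(k < n) ((bit k x && bit k y) : nat))%N.

Definition ket (N k : nat) : 'cV[algC]_N := \col_(i < N) ((i : nat) == k)%:R.

Definition hadamard (n : nat) : 'M[algC]_(2 ^ n) :=
  \matrix_(x < 2 ^ n, y < 2 ^ n)
     ((sqrtC ((2 ^ n)%N)%:R)^-1 * (-1) ^+ bdot n x y).

Definition codeword (n j : nat) : 'I_(2 ^ n) -> bool := fun x => bdot n x j.

Definition oracle (n : nat) (z : 'I_(2 ^ n) -> bool) : 'M[algC]_(2 ^ n) :=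
  \matrix_(x < 2 ^ n, y < 2 ^ n) (if x == y then (-1) ^+ z x else 0).

Arguments codeword : clear implicits.
Arguments oracle : clear implicits.
Arguments hadamard : clear implicits.
Arguments ket : clear implicits.

From mathcomp Require Import all_boot all_order all_algebra all_field.
From mathcomp Require Import zify ring.
Import GRing.Theory Num.Theory.
Local Open Scope ring_scope.

(* Conjugating the codeword oracle U_(W_a) by the Hadamard transform gives the
   permutation |b> |-> |a xor b>: the (y, b) entry is
   N^-1 sum_x (-1)^(x.y + x.a + x.b), which factors over the n bits of x and is
   1 exactly when y = a xor b bitwise.  For j < N/2 = 2^m one has
   2^m xor j = 2^m + j and (2^m - 1) xor j = 2^m - 1 - j. *)

Lemma bit_small k x : (x < 2 ^ k)%N -> bit k x = false.
Proof. by move=> h; rewrite /bit divn_small. Qed.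

Lemma bit0n k : bit k 0 = false.
Proof. by rewrite /bit div0n. Qed.

Lemma bit0 x : bit 0 x = odd x.
Proof. by rewrite /bit expn0 divn1. Qed.

Lemma bitS k x : bit k.+1 x = bit k (x %/ 2).
Proof. by rewrite /bit expnS divnMA. Qed.

Lemma bit_inj n x y : (x < 2 ^ n)%N -> (y < 2 ^ n)%N ->
  (forall k, (k < n)%N -> bit k x = bit k y) -> x = y.
Proof.
elim: n x y => [|n IH] x y hx hy eq_bits; first by rewrite expn0 in hx hy; lia.
have eq_half : (x %/ 2 = y %/ 2)%N.
  apply: IH; rewrite ?ltn_divLR -?expnSr //.
  by move=> k hk; rewrite -!bitS; apply: eq_bits.
have := eq_bits 0%N isT; rewrite !bit0 => eq_odd.
by rewrite (divn_eq x 2) (divn_eq y 2) !modn2 eq_half eq_odd.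
Qed.

Lemma bit_addpow k m x : (k < m)%N -> bit k (x + 2 ^ m) = bit k x.
Proof.
move=> km; rewrite /bit -(subnK (ltnW km)) expnD divnDMl ?expn_gt0 //.
by rewrite oddD oddX subn_eq0 leqNgt km addbF.
Qed.

Lemma bit_top m x : (x < 2 ^ m)%N -> bit m (x + 2 ^ m) = true.
Proof.
by move=> h; rewrite /bit -{1}(mul1n (2 ^ m)%N) divnDMl ?expn_gt0 // divn_small.
Qed.

Lemma bit_pow k m : bit k (2 ^ m) = (k == m).
Proof.
have [km | mk] := ltnP k m.
  by rewrite -[(2 ^ m)%N]add0n bit_addpow // bit0n; apply/esym/eqP; lia.
have [-> | km] := eqVneq k m; first by rewrite -[(2 ^ m)%N]add0n bit_top ?expn_gt0.
by rewrite bit_small // ltn_exp2l //; lia.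
Qed.

Lemma bit_pow_add k m x : (x < 2 ^ m)%N -> (k <= m)%N ->
  bit k (2 ^ m + x) = bit k x (+) (k == m).
Proof.
move=> hx km; rewrite addnC.
have [-> | neq_km] := eqVneq k m; first by rewrite bit_top // bit_small.
by rewrite bit_addpow ?addbF //; lia.
Qed.

Lemma bit_compl m k x : (x < 2 ^ m)%N -> (k < m)%N ->
  bit k (2 ^ m - 1 - x) = ~~ bit k x.
Proof.
move=> hx hk; rewrite /bit.
set d := (2 ^ k)%N; set E := (2 ^ (m - k))%N.
have d_gt0 : (0 < d)%N by rewrite expn_gt0.
have E_gt0 : (0 < E)%N by rewrite expn_gt0.
have odd_E : odd E = false by rewrite oddX subn_eq0 leqNgt hk.
have pow_m : (2 ^ m = E * d)%N by rewrite -expnD subnK // ltnW.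
set q := (x %/ d)%N; set r := (x %% d)%N.
have def_x : x = (q * d + r)%N by rewrite /q /r -divn_eq.
have r_lt : (r < d)%N by rewrite ltn_mod.
have q_lt : (q < E)%N by rewrite /q ltn_divLR // -pow_m.
(* subtracting from 2^m - 1 complements the quotient and the remainder by d *)
have -> : (2 ^ m - 1 - x = (d - 1 - r) + (E - 1 - q) * d)%N.
  have : (q * d + d <= E * d)%N by rewrite -mulSnr leq_mul2r q_lt orbT.
  rewrite pow_m def_x !mulnBl mul1n; nia.
rewrite divnDMl // divn_small; last by lia.
by rewrite add0n oddB ?oddB ?odd_E //; lia.
Qed.

Lemma bit_pow_sub1 k m : bit k (2 ^ m - 1) = (k < m)%N.
Proof.
have [km | mk] := ltnP k m.
  by rewrite -(subn0 (2 ^ m - 1)%N) bit_compl ?expn_gt0 // bit0n.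
rewrite bit_small // (leq_trans _ (@leq_pexp2l 2 _ _ isT mk)) //.
by have := expn_gt0 2 m; lia.
Qed.

Lemma bit_pow_sub1_sub k m x : (x < 2 ^ m)%N -> (k <= m)%N ->
  bit k (2 ^ m - 1 - x) = bit k x (+) (k < m)%N.
Proof.
move=> hx km.
have [lt_km | ] := ltnP k m; first by rewrite bit_compl // addbT.
move=> mk; have -> : k = m by lia.
by rewrite !bit_small //; have := expn_gt0 2 m; lia.
Qed.

Lemma forall_bit_xorE n a b c (y : nat) : (c < 2 ^ n)%N -> (y < 2 ^ n)%N ->
  (forall k, (k < n)%N -> bit k c = bit k a (+) bit k b) ->
  [forall k : 'I_n, bit k y == bit k a (+) bit k b] = (y == c).
Proof.
move=> hc hy def_c; apply/forallP/eqP => [eq_bits | -> k]; last first.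
  by rewrite def_c.
apply: (@bit_inj n) => // k hk; rewrite def_c //; exact/eqP/(eq_bits (Ordinal hk)).
Qed.

Lemma bdotC n x y : bdot n x y = bdot n y x.
Proof. by rewrite /bdot; congr odd; apply: eq_bigr => k _; rewrite andbC. Qed.

Lemma sign_bdot n x y :
  (-1) ^+ bdot n x y = \prod_(k < n) (-1) ^+ (bit k x && bit k y) :> algC.
Proof. by rewrite /bdot signr_odd expr_sum. Qed.

Lemma sum_prod_bits (R : comPzSemiRingType) n (f : nat -> bool -> R) :
  \sum_(x < 2 ^ n) \prod_(k < n) f k (bit k x) =
  \prod_(k < n) (f k false + f k true).
Proof.
elim: n => [|n IH]; first by rewrite expn0 big_ord1 !big_ord0.
rewrite expnS mul2n -addnn big_split_ord /= big_ord_recr /= mulrDr -IH.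
rewrite !mulr_suml; congr (_ + _); apply: eq_bigr => x _.
  by rewrite big_ord_recr /= bit_small.
rewrite big_ord_recr /= addnC bit_top //; congr (_ * _).
by apply: eq_bigr => k _; rewrite bit_addpow.
Qed.

Lemma sum_sign_bdot3 n y a b :
  \sum_(x < 2 ^ n)
     ((-1) ^+ bdot n x y * (-1) ^+ bdot n x a * (-1) ^+ bdot n x b : algC)
  = if [forall k : 'I_n, bit k y == bit k a (+) bit k b] then (2 ^ n)%:R
    else 0.
Proof.
under eq_bigr => x _ do rewrite !sign_bdot -!big_split.
rewrite (@sum_prod_bits _ n (fun k t => (-1) ^+ (t && bit k y) *
   (-1) ^+ (t && bit k a) * (-1) ^+ (t && bit k b))) /=.
have bit_factor (p q r : bool) : 1 * 1 * 1 +
    (-1) ^+ p * (-1) ^+ q * (-1) ^+ r = (p == q (+) r)%:R *+ 2 :> algC.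
  by case: p; case: q; case: r; rewrite /= ?expr0 ?expr1; ring.
under eq_bigr => k _ do rewrite bit_factor.
case: forallP => [eq_bits | neq_bits].
  under eq_bigr => k _ do rewrite eq_bits.
  by rewrite prodr_const card_ord natrX.
have [k /negbTE neq_k] : exists k : 'I_n, ~~ (bit k y == bit k a (+) bit k b).
  by apply/existsP; rewrite -negb_forall; apply/forallP.
by rewrite (bigD1 k) //= neq_k mul0rn mul0r.
Qed.

Lemma ket_delta {N k : nat} (hk : (k < N)%N) : ket N k = delta_mx (Ordinal hk) 0.
Proof. by apply/matrixP => i l; rewrite !mxE ord1 eqxx andbT. Qed.

Lemma oracle_diag n z : oracle n z = diag_mx (\row_x (-1) ^+ z x).
Proof. by apply/matrixP => x y; rewrite !mxE eq_sym; case: eqVneq => // ->. Qed.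

Lemma hadamard_oracle_codeword n a :
  hadamard n *m oracle n (codeword n a) *m hadamard n
  = \matrix_(y, b) [forall k : 'I_n, bit k y == bit k a (+) bit k b]%:R.
Proof.
apply/matrixP => y b.
set c : algC := (sqrtC (2 ^ n)%N%:R)^-1.
have c2N : c * c * (2 ^ n)%N%:R = 1.
  by rewrite -expr2 exprVn sqrtCK mulVf // pnatr_eq0 expn_eq0.
rewrite oracle_diag mul_mx_diag !mxE.
transitivity (c * c * \sum_(x < 2 ^ n) ((-1) ^+ bdot n x y *
    (-1) ^+ bdot n x a * (-1) ^+ bdot n x b)).
  rewrite mulr_sumr; apply: eq_bigr => x _.
  by rewrite !mxE /codeword (bdotC _ y x) /c; ring.
by rewrite sum_sign_bdot3 natrX; case: forallP; rewrite ?mulr0 // -natrX c2N.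
Qed.

Theorem lemma1 (n j : nat) (hn : (1 <= n)%N) (hj : (j < 2 ^ n %/ 2)%N) :
  hadamard n *m oracle n (codeword n j) *m hadamard n
    *m (ket (2 ^ n)%N (2 ^ n %/ 2)%N + ket (2 ^ n)%N (2 ^ n %/ 2 - 1)%N)
  = ket (2 ^ n)%N (2 ^ n %/ 2 + j)%N + ket (2 ^ n)%N (2 ^ n %/ 2 - 1 - j)%N.
Proof.
case: n hn hj => [//|m] _ hj.
have half_pow : (2 ^ m.+1 %/ 2 = 2 ^ m)%N by rewrite expnS mulKn.
rewrite half_pow in hj *.
have pow_lt : (2 ^ m < 2 ^ m.+1)%N by rewrite ltn_exp2l.
have pow1_lt : (2 ^ m - 1 < 2 ^ m.+1)%N by lia.
have sum_lt : (2 ^ m + j < 2 ^ m.+1)%N by rewrite expnS; lia.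
have diff_lt : (2 ^ m - 1 - j < 2 ^ m.+1)%N by lia.
rewrite hadamard_oracle_codeword mulmxDr (ket_delta pow_lt) (ket_delta pow1_lt).
apply/matrixP => y i; rewrite -!colE !mxE.
rewrite (@forall_bit_xorE _ _ _ _ _ sum_lt)
  ?(@forall_bit_xorE _ _ _ _ _ diff_lt) // => k hk.
- by rewrite bit_pow_sub1_sub ?bit_pow_sub1 // -ltnS.
- by rewrite bit_pow_add ?bit_pow // -ltnS.
Qed.
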